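(* Let $\Gamma$ be a metrized graph with $v \geq 3$ vertices. For admissible contractions $\overline{\Gamma}_{i_1,\dots,i_{v-2}}$ (which have exactly two vertices, denoted $p'$ and $q'$), $$(v-2)!\; y(\Gamma) = \sum_{e_{i_1} \in E(\Gamma)}\frac{R_{i_1}}{L_{i_1}+R_{i_1}} \sum_{e_{i_2} \in E(\overline{\Gamma}_{i_1})}\frac{R_{i_2}}{L_{i_2}+R_{i_2}}\cdots\sum_{e_{i_{v-2}} \in E(\overline{\Gamma}_{i_1, \dots, i_{v-3}})}\frac{R_{i_{v-2}}}{L_{i_{v-2}}+R_{i_{v-2}}}\; r_{\overline{\Gamma}_{i_1,\dots, i_{v-2}}}(p',q').$$
   Context: A metrized graph $\Gamma$ is a finite connected graph (multiple edges and self-loops allowed) each of whose edges is identified with a closed segment of positive length, with a finite nonempty vertex set $V(\Gamma)$ containing every point of valence $\neq2$; $v=\#V(\Gamma)$, $L_i$ the length of $e_i$; $r_\beta$ denotes effective resistance in $\beta$ (edges as resistors of resistance equal to length). For an edge $e_i$ with end points $p_i,q_i$: if $\Gamma-e_i$ (interior deleted) is connected, $R_i$ is the effective resistance between $p_i,q_i$ in $\Gamma-e_i$, $R_{a_i,p}=\hat j_{p_i}(p,q_i)$, $R_{b_i,p}=\hat j_{q_i}(p,p_i)$ with $\hat j_z(x,y)$ the voltage function of $\Gamma-e_i$ (potential at $x$ when unit current enters at $y$ and exits at $z$, potential $0$ at $z$); if $e_i$ is a bridge, $R_{a_i,p}=0,R_{b_i,p}=R_i$ for $p$ in the component of $\Gamma-e_i$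 containing $p_i$ and $R_{a_i,p}=R_i,R_{b_i,p}=0$ otherwise, with every expression in $R_i$ interpreted as its limit as $R_i\to\infty$; for a self-loop $R_i=0$. For a fixed vertex $p$ (independent of choice), $y(\Gamma)=\frac14\sum_{e_i}\frac{L_iR_i^2}{(L_i+R_i)^2}+\frac34\sum_{e_i}\frac{L_i(R_{a_i,p}-R_{b_i,p})^2}{(L_i+R_i)^2}$. $\overline\Gamma_{i_1,\dots,i_k}$ is obtained by successively contracting to a point $e_{i_1}\in E(\Gamma)$, then $e_{i_2}\in E(\overline\Gamma_{i_1})$, etc. (vertex sets being images of $V(\Gamma)$); $L_{i_j},R_{i_j}$ are computed in $\overline\Gamma_{i_1,\dots,i_{j-1}}$. A contraction is admissible if each contracted edge has distinct end points (self-loop terms vanish anyway since $R=0$). *)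

From HB Require Import structures.
From mathcomp Require Import all_boot all_order all_algebra.
From mathcomp Require Import reals.
From Stdlib Require Import ClassicalEpsilon.
Set Implicit Arguments. Unset Strict Implicit. Unset Printing Implicit Defensive.
Import Order.TTheory GRing.Theory Num.Theory.
Local Open Scope ring_scope.

(* A model of a metrized graph: a finite vertex set [verts] inside a finite
   label type V, and a finite list of edges ((p, q), L) with end points p, q
   and length L (multiple edges and self-loops allowed). *)
Record mgraph (V : finType) (R : realType) := MGraph {
  verts : {set V};
  edges : seq (V * V * R)
}.

Section MG.
Variables (V : finType) (R : realType).
Implicit Types (G : mgraph V R) (e : V * V * R).

Definition ep1 e : V := e.1.1.
Definition ep2 e : V := e.1.2.
Definition len e : R := e.2.

Definition wf_graph G : Prop :=
  forall e, e \in edges G -> [/\ ep1 e \in verts G, ep2 e \in verts G & 0 < len e].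

Definition adj G : rel V := fun x y =>
  has (fun e => ((ep1 e == x) && (ep2 e == y)) || ((ep1 e == y) && (ep2 e == x)))
      (edges G).

Definition connectedb G : bool :=
  [forall x in verts G, forall y in verts G, connect (adj G) x y].

Definition delete_edge G e : mgraph V R := MGraph (verts G) (rem e (edges G)).

Definition is_bridge G e : bool := ~~ connectedb (delete_edge G e).

Definition contract G e : mgraph V R :=
  let rn x := if x == ep2 e then ep1 e else x in
  MGraph (verts G :\ ep2 e)
         (map (fun f => (rn (ep1 f), rn (ep2 f), len f)) (rem e (edges G))).

(* net current flowing out of w through the edges, for a potential f
   (each edge is a resistor of resistance equal to its length) *)
Definition outflow G (f : V -> R) (w : V) : R :=
  \sum_(e <- edges G)
     ((if ep1 e == w then (f w - f (ep2 e)) / len e else 0)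
    + (if ep2 e == w then (f w - f (ep1 e)) / len e else 0)).

(* f is the potential when unit current enters at y and exits at z,
   with potential 0 at z (Kirchhoff's laws) *)
Definition is_voltage G (z y : V) (f : V -> R) : Prop :=
  f z = 0 /\
  forall w, w \in verts G ->
    outflow G f w = (if w == y then 1 else 0) - (if w == z then 1 else 0).

(* voltage function j_z(x, y) (meaningful for connected G) *)
Definition jvolt G (z x y : V) : R :=
  epsilon (inhabits (fun _ : V => 0 : R)) (is_voltage G z y) x.

Definition eff_res G (x y : V) : R := jvolt G y x x.

Definition Ri G e : R := eff_res (delete_edge G e) (ep1 e) (ep2 e).

(* R_i / (L_i + R_i), with its limit 1 for a bridge (R_i -> oo) *)
Definition ratio G e : R :=
  if is_bridge G e then 1 else Ri G e / (len e + Ri G e).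

(* y(Gamma) computed with base vertex p; bridge terms are the limits
   R_i -> oo of the summands (both equal to L_i) *)
Definition yterm1 G e : R :=
  if is_bridge G e then len e
  else len e * (Ri G e) ^+ 2 / (len e + Ri G e) ^+ 2.

Definition yterm2 G (p : V) e : R :=
  if is_bridge G e then len e
  else
    let Ra := jvolt (delete_edge G e) (ep1 e) p (ep2 e) in
    let Rb := jvolt (delete_edge G e) (ep2 e) p (ep1 e) in
    len e * (Ra - Rb) ^+ 2 / (len e + Ri G e) ^+ 2.

Definition y_inv G (p : V) : R :=
  (1 / 4) * (\sum_(e <- edges G) yterm1 G e)
  + (3 / 4) * (\sum_(e <- edges G) yterm2 G p e).

Definition two_vertex_res G : R :=
  match enum (verts G) with
  | [:: a; b] => eff_res G a b
  | _ => 0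
  end.

(* nested sum over admissible contraction sequences of length k
   (self-loops are skipped: their terms vanish since R = 0) *)
Fixpoint nested_sum (k : nat) G : R :=
  match k with
  | 0 => two_vertex_res G
  | k'.+1 => \sum_(e <- edges G | ep1 e != ep2 e)
               ratio G e * nested_sum k' (contract G e)
  end.

End MG.

From Pilot Require Import Defs.
From HB Require Import structures.
From mathcomp Require Import all_boot all_order all_algebra.
From mathcomp Require Import reals.
From mathcomp Require Import ring lra.
From Stdlib Require Import ClassicalEpsilon.
Set Implicit Arguments. Unset Strict Implicit. Unset Printing Implicit Defensive.
Import Order.TTheory GRing.Theory Num.Theory.
Local Open Scope ring_scope.

(* Everything is expressed through the Green function [g(x, w) = j_p(w, x)],
   which is symmetric.  For an edge [e = (a, b)] put [r = g(a,a) - 2 g(a,b)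
   + g(b,b)] (the resistance between [a] and [b] in the whole graph) and
   [q = g(a,a) - g(b,b)]; then [R_e / (L_e + R_e) = r / L_e] and the two
   summands of [y] are [r^2 / L_e] and [q^2 / L_e], the bridge case being the
   limit [R_e -> oo] (Foster's theorem: the [r / L_e] sum to [v - 1]).
   Contracting [e] replaces [g] by the rank-one update [g - u u^T / r] with
   [u = g(a, .) - g(b, .)], so [y(G/e)] is an explicit rational function of
   [g].  Weighting by [r / L_e] and summing over [e], three energy identities
   for the dipoles [u] give [sum_e R_e/(L_e+R_e) y(G/e) = (v - 2) y(G)], and
   the theorem follows by induction on [v], the two-vertex case being
   [y = r(p', q')]. *)

Section Components.
Variables (V : finType) (R : realType).
Implicit Types (G : mgraph V R) (e : V * V * R).

Lemma adj_sym G : symmetric (adj G).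
Proof. by move=> x y; apply: eq_in_has => e _; rewrite orbC. Qed.

Lemma adj_edge G e : e \in edges G -> adj G (ep1 e) (ep2 e).
Proof. by move=> eE; apply/hasP; exists e => //; rewrite !eqxx. Qed.

Lemma adjP G u w : adj G u w -> exists2 e, e \in edges G &
  (ep1 e = u /\ ep2 e = w) \/ (ep1 e = w /\ ep2 e = u).
Proof.
case/hasP => e eE /orP[/andP[/eqP h1 /eqP h2]|/andP[/eqP h1 /eqP h2]]; exists e => //;
  by [left|right].
Qed.

Lemma mem_rem_or (T : eqType) (x y : T) (s : seq T) : y \in s -> x \in s ->
  x = y \/ x \in rem y s.
Proof.
move=> yS xS; have := perm_mem (perm_to_rem yS) x; rewrite xS inE.
by move/esym/orP => [/eqP ->|]; [left|right].
Qed.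

Lemma connect_adj_edge G a e : e \in edges G ->
  connect (adj G) a (ep1 e) = connect (adj G) a (ep2 e).
Proof.
move=> eE; have ae := adj_edge eE; apply/idP/idP => h.
  exact: connect_trans h (connect1 ae).
by apply: connect_trans h (connect1 _); rewrite adj_sym.
Qed.

Lemma connectedb_from G a : {in verts G, forall v, connect (adj G) a v} -> connectedb G.
Proof.
move=> ca; apply/forall_inP => x xS; apply/forall_inP => y yS.
by apply: connect_trans (ca y yS); rewrite (sym_connect_sym (@adj_sym G)) ca.
Qed.

Lemma connect_closed_edges G (P : pred V) :
  (forall e, e \in edges G -> P (ep1 e) = P (ep2 e)) -> closed (adj G) P.
Proof. by move=> PE u w /adjP[e /PE eP [[<- <-]|[<- <-]]]. Qed.

Lemma connectedb_delete_edge G e : wf_graph G -> connectedb G -> e \in edges G ->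
  connect (adj (delete_edge G e)) (ep1 e) (ep2 e) -> connectedb (delete_edge G e).
Proof.
move=> wf conn eE cab; set G' := delete_edge G e; case: (wf e eE) => aS _ _.
have cl : closed (adj G) [pred v | connect (adj G') (ep1 e) v].
  apply: connect_closed_edges => f fE; case: (@mem_rem_or _ f e _ eE fE) => [->|fE'].
    by rewrite !inE connect0 cab.
  exact: connect_adj_edge.
apply: (@connectedb_from _ (ep1 e)) => v vS.
move/forall_inP: conn => /(_ _ aS) /forall_inP /(_ v vS) cav.
by have := closed_connect cl cav; rewrite !inE connect0 => <-.
Qed.

End Components.

Section Kirchhoff.
Variables (V : finType) (R : realType).
Implicit Types (G : mgraph V R) (e : V * V * R) (f g h : V -> R).

Definition unit_at (a w : V) : R := if w == a then 1 else 0.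

Lemma sum_unit_at (A : {set V}) g a : a \in A -> \sum_(w in A) g w * unit_at a w = g a.
Proof.
move=> aA; rewrite (bigD1 a) //= /unit_at eqxx mulr1 big1 ?addr0 // => w /andP[_].
by move/negbTE ->; rewrite mulr0.
Qed.

Lemma sum_unit_atB (A : {set V}) g a b : a \in A -> b \in A ->
  \sum_(w in A) g w * (unit_at a w - unit_at b w) = g a - g b.
Proof.
move=> aA bA; under eq_bigr do rewrite mulrBr.
by rewrite sumrB !sum_unit_at.
Qed.

Definition edge_flow e f (w : V) : R :=
  (f (ep1 e) - f (ep2 e)) / len e * (unit_at (ep1 e) w - unit_at (ep2 e) w).

Lemma outflowE G f w : outflow G f w = \sum_(e <- edges G) edge_flow e f w.
Proof.
apply: eq_bigr => e _; rewrite /edge_flow /unit_at ![w == _]eq_sym.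
move: (ep1 e) (ep2 e) (len e) => a b l.
by case: (eqVneq a w) => [?|?]; case: (eqVneq b w) => [?|?]; subst; rewrite ?eqxx; ring.
Qed.

Lemma eq_outflow G f g : f =1 g -> outflow G f =1 outflow G g.
Proof. by move=> fg w; rewrite !outflowE; apply: eq_bigr => e _; rewrite /edge_flow !fg. Qed.

Lemma outflow_lin G f g (a b : R) w :
  outflow G (fun x => a * f x + b * g x) w = a * outflow G f w + b * outflow G g w.
Proof.
rewrite !outflowE !mulr_sumr -big_split; apply: eq_bigr => e _ /=.
by rewrite /edge_flow; ring.
Qed.

Lemma outflowZ G f (a : R) w : outflow G (fun x => a * f x) w = a * outflow G f w.
Proof.
rewrite (@eq_outflow _ _ (fun x => a * f x + 0 * f x)) ?outflow_lin; first by ring.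
by move=> x; ring.
Qed.

Lemma outflowB G f g w : outflow G (fun x => f x - g x) w = outflow G f w - outflow G g w.
Proof.
rewrite (@eq_outflow _ _ (fun x => 1 * f x + (-1) * g x)) ?outflow_lin; first by ring.
by move=> x; ring.
Qed.

Lemma outflow_sum G (F : V -> V -> R) w :
  outflow G (fun x => \sum_v F v x) w = \sum_v outflow G (F v) w.
Proof.
rewrite outflowE; under [RHS]eq_bigr do rewrite outflowE.
rewrite [RHS]exchange_big; apply: eq_bigr => e _.
by rewrite /edge_flow -sumrB !mulr_suml.
Qed.

Lemma outflow_flat G f w : (forall e, e \in edges G -> f (ep1 e) = f (ep2 e)) ->
  outflow G f w = 0.
Proof.
move=> flat; rewrite outflowE big1_seq // => e /andP[_ /flat fe].
by rewrite /edge_flow fe subrr !mul0r.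
Qed.

Lemma outflow_delete_edge G e f w : e \in edges G ->
  outflow (delete_edge G e) f w = outflow G f w - edge_flow e f w.
Proof. by move=> eE; rewrite !outflowE [in RHS](big_rem _ eE) /=; ring. Qed.

Lemma wf_delete_edge G e : wf_graph G -> wf_graph (delete_edge G e).
Proof. by move=> wf f /mem_rem; apply: wf. Qed.

Section Energy.
Variables (G : mgraph V R).
Hypothesis wf : wf_graph G.

Lemma sum_outflow_by_parts f g :
  \sum_(w in verts G) g w * outflow G f w =
  \sum_(e <- edges G) (g (ep1 e) - g (ep2 e)) * (f (ep1 e) - f (ep2 e)) / len e.
Proof.
under eq_bigr do rewrite outflowE mulr_sumr.
rewrite exchange_big /=; apply: eq_big_seq => e eE; case: (wf eE) => aS bS _.
under eq_bigr do rewrite /edge_flow mulrCA.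
by rewrite -mulr_sumr sum_unit_atB //; ring.
Qed.

Lemma sum_outflow_eq0 f : \sum_(w in verts G) outflow G f w = 0.
Proof.
have := sum_outflow_by_parts f (fun=> 1); under eq_bigr do rewrite mul1r.
by move=> ->; rewrite big1 // => e _; rewrite subrr !mul0r.
Qed.

Lemma energy_ge0 f : 0 <= \sum_(w in verts G) f w * outflow G f w.
Proof.
rewrite sum_outflow_by_parts big_seq; apply: sumr_ge0 => e eE.
by apply: divr_ge0; [rewrite -expr2 sqr_ge0 | case: (wf eE) => _ _ /ltW].
Qed.

Hypothesis conn : connectedb G.

Lemma energy_eq0_const h :
  \sum_(w in verts G) h w * outflow G h w = 0 -> {in verts G &, forall x y, h x = h y}.
Proof.
rewrite sum_outflow_by_parts big_seq => /eqP; rewrite psumr_eq0; last first.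
  move=> e eE; apply: divr_ge0; first by rewrite -expr2 sqr_ge0.
  by case: (wf eE) => _ _ /ltW.
move=> /allP flat_all.
have flat e : e \in edges G -> h (ep1 e) = h (ep2 e).
  move=> eE; have /implyP/(_ eE) := flat_all e eE; case: (wf eE) => _ _ lpos.
  by rewrite mulf_eq0 invr_eq0 (gt_eqF lpos) orbF mulf_eq0 orbb subr_eq0 => /eqP.
move=> x y xS yS.
have cl : closed (adj G) [pred v | h v == h x].
  by apply: connect_closed_edges => e /flat; rewrite !inE => ->.
move/forall_inP: conn => /(_ x xS) /forall_inP /(_ y yS) cxy.
by have := closed_connect cl cxy; rewrite !inE eqxx => /esym/eqP.
Qed.

Lemma outflow_inj_const f g :
  {in verts G, forall w, outflow G f w = outflow G g w} ->
  {in verts G &, forall x y, f x - g x = f y - g y}.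
Proof.
move=> fg; apply: (@energy_eq0_const (fun x => f x - g x)).
by apply: big1 => w wS; rewrite outflowB fg // subrr mulr0.
Qed.

End Energy.
End Kirchhoff.
Arguments unit_at {V R}.

Section VoltageExistence.
Variables (V : finType) (R : realType).
Variables (G : mgraph V R) (z : V).
Hypotheses (wf : wf_graph G) (conn : connectedb G) (zS : z \in verts G).

(* injective, hence onto: this is how voltages are shown to exist *)
Definition kirchhoff_map (f : V -> R) (w : V) : R :=
  if (w \in verts G) && (w != z) then outflow G f w else f w.

Lemma kirchhoff_map_decomp f w :
  kirchhoff_map f w = \sum_v f v * kirchhoff_map (unit_at v) w.
Proof.
have fE : f =1 fun x => \sum_v f v * unit_at v x.
  move=> x; rewrite (bigD1 x) //= /unit_at eqxx mulr1 big1 ?addr0 // => v /negbTE.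
  by rewrite eq_sym => ->; rewrite mulr0.
rewrite /kirchhoff_map; case: ifP => _; last first.
  by rewrite fE; apply: eq_bigr.
by rewrite (eq_outflow _ fE) outflow_sum; apply: eq_bigr => v _; rewrite outflowZ.
Qed.

Lemma kirchhoff_map_inj f : (forall w, kirchhoff_map f w = 0) -> forall w, f w = 0.
Proof.
move=> f0.
have fz : f z = 0 by have := f0 z; rewrite /kirchhoff_map eqxx andbF.
have out0 w : w \in verts G -> w != z -> outflow G f w = 0.
  by move=> wS wz; have := f0 w; rewrite /kirchhoff_map wS wz.
have fc : {in verts G &, forall x y, f x = f y}.
  apply: energy_eq0_const => //; rewrite (bigD1 z) //= fz mul0r add0r.
  by rewrite big1 // => w /andP[wS wz]; rewrite out0 // mulr0.
move=> w; case wS: (w \in verts G); first by rewrite (fc w z).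
by have := f0 w; rewrite /kirchhoff_map wS.
Qed.

Local Notation n := #|V|.

Definition kirchhoff_mx : 'M[R]_n :=
  \matrix_(i, j) kirchhoff_map (unit_at (enum_val i)) (enum_val j).

Definition fun_of_row (u : 'rV[R]_n) : V -> R := fun v => u 0 (enum_rank v).

Lemma mul_kirchhoff_mx u j :
  (u *m kirchhoff_mx) 0 j = kirchhoff_map (fun_of_row u) (enum_val j).
Proof.
rewrite mxE kirchhoff_map_decomp [RHS](reindex (fun i : 'I_n => enum_val i)) /=; last first.
  by apply: onW_bij; exact: enum_val_bij.
by apply: eq_bigr => i _; rewrite /fun_of_row enum_valK mxE.
Qed.

Lemma kirchhoff_mx_unit : kirchhoff_mx \in unitmx.
Proof.
rewrite -row_free_unit -kermx_eq0; apply/eqP/row_matrixP => i; rewrite row0.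
have K : row i (kermx kirchhoff_mx) *m kirchhoff_mx = 0.
  by apply/sub_kermxP; exact: row_sub.
apply/rowP => k; rewrite [RHS]mxE.
have := @kirchhoff_map_inj (fun_of_row (row i (kermx kirchhoff_mx))) _ (enum_val k).
rewrite /fun_of_row enum_valK; apply => w.
by rewrite -(enum_rankK w) -mul_kirchhoff_mx K mxE.
Qed.

Lemma kirchhoff_map_surj (t : V -> R) : exists f, forall w, kirchhoff_map f w = t w.
Proof.
exists (fun_of_row ((\row_j t (enum_val j)) *m invmx kirchhoff_mx)) => w.
by rewrite -(enum_rankK w) -mul_kirchhoff_mx mulmxKV ?kirchhoff_mx_unit // mxE.
Qed.

Variable y : V.
Hypothesis yS : y \in verts G.

Lemma voltage_exists : exists f, is_voltage G z y f.
Proof.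
have [f Hf] := kirchhoff_map_surj (fun w => if w == z then 0 else unit_at y w).
have out w : w \in verts G -> w != z -> outflow G f w = unit_at y w.
  by move=> wS wz; have := Hf w; rewrite /kirchhoff_map wS wz (negbTE wz).
exists f; split; first by have := Hf z; rewrite /kirchhoff_map eqxx andbF.
move=> w wS; case: (eqVneq w z) => [->|wz]; last by rewrite out // subr0.
have S := sum_unit_at (fun=> 1 : R) yS; rewrite (bigD1 z) //= in S.
have := sum_outflow_eq0 wf f; rewrite (bigD1 z) //=.
rewrite (eq_bigr (fun v => 1 * unit_at y v)); last first.
  by move=> v /andP[vS vz]; rewrite out // mul1r.
move: S; rewrite /unit_at; case: (z == y); lra.
Qed.

End VoltageExistence.

Section Green.
Variables (V : finType) (R : realType).
Implicit Types (G : mgraph V R) (f : V -> R).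

Lemma jvolt_voltage G z y : wf_graph G -> connectedb G -> z \in verts G ->
  y \in verts G -> is_voltage G z y (fun x => jvolt G z x y).
Proof.
move=> wf conn zS yS.
exact: epsilon_spec (inhabits _) _ (voltage_exists wf conn zS yS).
Qed.

Lemma jvoltE G z y f : wf_graph G -> connectedb G -> z \in verts G -> y \in verts G ->
  {in verts G, forall w, outflow G f w = unit_at y w - unit_at z w} ->
  {in verts G, forall x, jvolt G z x y = f x - f z}.
Proof.
move=> wf conn zS yS fout x xS; case: (jvolt_voltage wf conn zS yS) => j0 jout.
have E : {in verts G, forall w, outflow G (fun x => jvolt G z x y) w = outflow G f w}.
  by move=> w wS; rewrite jout // fout.
by have := outflow_inj_const wf conn E xS zS; rewrite /= j0; lra.
Qed.

Variables (G : mgraph V R) (p : V).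
Hypotheses (wf : wf_graph G) (conn : connectedb G) (pS : p \in verts G).

Definition green (x : V) : V -> R := fun w => jvolt G p w x.

Lemma green_ground x : x \in verts G -> green x p = 0.
Proof. by move=> xS; case: (jvolt_voltage wf conn pS xS). Qed.

Lemma outflow_green x w : x \in verts G -> w \in verts G ->
  outflow G (green x) w = unit_at x w - unit_at p w.
Proof. by move=> xS wS; case: (jvolt_voltage wf conn pS xS) => _ ->. Qed.

Lemma outflow_greenB a b w : a \in verts G -> b \in verts G -> w \in verts G ->
  outflow G (fun x => green a x - green b x) w = unit_at a w - unit_at b w.
Proof. by move=> aS bS wS; rewrite outflowB !outflow_green //; ring. Qed.

Lemma sum_green_outflow x w : x \in verts G -> w \in verts G ->
  \sum_(v in verts G) green x v * outflow G (green w) v = green x w.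
Proof.
move=> xS wS; under eq_bigr => v vS do rewrite outflow_green //.
by rewrite sum_unit_atB // green_ground // subr0.
Qed.

Lemma green_sym x w : x \in verts G -> w \in verts G -> green x w = green w x.
Proof.
move=> xS wS; rewrite -sum_green_outflow // -[RHS]sum_green_outflow //.
by rewrite !sum_outflow_by_parts //; apply: eq_bigr => e _; ring.
Qed.

Lemma jvolt_green z x y : z \in verts G -> y \in verts G -> x \in verts G ->
  jvolt G z x y = green y x - green z x - green y z + green z z.
Proof.
move=> zS yS xS; rewrite (@jvoltE G z y (fun v => green y v - green z v)) //.
  by ring.
by move=> w wS; rewrite outflow_greenB.
Qed.

Definition green_res (a b : V) : R := green a a - green a b - green b a + green b b.
Definition green_diag_diff (a b : V) : R := green a a - green b b.

Lemma green_diag_diffE a b : a \in verts G -> b \in verts G ->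
  green_diag_diff a b = (green a a - green b a) + (green a b - green b b).
Proof. by move=> aS bS; rewrite /green_diag_diff (green_sym bS aS); ring. Qed.

End Green.


Section EdgeTerms.
Variables (V : finType) (R : realType).
Variables (G : mgraph V R) (p : V).
Hypotheses (wf : wf_graph G) (conn : connectedb G) (pS : p \in verts G).

Local Notation g := (green G p).
Local Notation r e := (green_res G p (ep1 e) (ep2 e)).
Local Notation q e := (green_diag_diff G p (ep1 e) (ep2 e)).

Section NonBridge.
Variable e : V * V * R.
Hypotheses (eE : e \in edges G) (nb : ~~ is_bridge G e).

Local Notation a := (ep1 e).
Local Notation b := (ep2 e).
Local Notation l := (len e).
Local Notation G' := (delete_edge G e).
Local Notation psi x := (jvolt G' b x a).

Let aS : a \in verts G. Proof. by case: (wf eE). Qed.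
Let bS : b \in verts G. Proof. by case: (wf eE). Qed.
Let lpos : 0 < l. Proof. by case: (wf eE). Qed.
Let wf' : wf_graph G'. Proof. exact: wf_delete_edge. Qed.
Let conn' : connectedb G'. Proof. by move: nb; rewrite /is_bridge negbK. Qed.

Lemma outflow_delete_edge_voltage w : w \in verts G ->
  outflow G' (fun x => psi x) w = unit_at a w - unit_at b w.
Proof. by move=> wS; case: (jvolt_voltage wf' conn' bS aS) => _ ->. Qed.

Lemma Ri_ge0 : 0 <= Ri G e.
Proof.
have := energy_ge0 wf' (fun x => psi x).
under eq_bigr => v vS do rewrite outflow_delete_edge_voltage //.
by rewrite sum_unit_atB //; case: (jvolt_voltage wf' conn' bS aS) => -> _; rewrite subr0.
Qed.

(* putting [e] back, the voltage of [G - e] carries the current [(l + R_e) / l] in [G] *)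
Lemma dipole_delete_edge x : x \in verts G ->
  (l + Ri G e) * (g a x - g b x) = l * (psi x - psi p).
Proof.
move=> xS; have hl : l != 0 by rewrite gt_eqF.
have E : {in verts G, forall w, outflow G (fun x => (l + Ri G e) * (g a x - g b x)) w
                              = outflow G (fun x => l * psi x) w}.
  move=> w wS; rewrite (outflowZ G (fun x => g a x - g b x)) !outflowZ.
  have := outflow_delete_edge (fun x => psi x) w eE.
  rewrite outflow_delete_edge_voltage // => /esym/(canRL (subrK _)) ->.
  case: (jvolt_voltage wf' conn' bS aS) => psib _.
  by rewrite outflow_greenB // /edge_flow psib /Ri /eff_res; field.
have := outflow_inj_const wf conn E xS pS; rewrite /= !green_ground //.
by rewrite subrr mulr0 sub0r => /(canRL (subrK _)) ->; ring.
Qed.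

Lemma edge_terms_nonbridge :
  [/\ Defs.ratio G e = r e / l, yterm1 G e = r e ^+ 2 / l & yterm2 G p e = q e ^+ 2 / l].
Proof.
have [psib _] := jvolt_voltage wf' conn' bS aS.
have hl : l != 0 by rewrite gt_eqF.
have hlr : l + Ri G e != 0 by rewrite gt_eqF // ltr_wpDr ?Ri_ge0.
have Ea := dipole_delete_edge aS; have Eb := dipole_delete_edge bS.
rewrite psib -[psi a]/(Ri G e) in Ea Eb.
have hR : r e = l * Ri G e / (l + Ri G e).
  apply: (mulfI hlr); rewrite mulrCA divff // mulr1 /green_res.
  have -> : (l + Ri G e) * (g a a - g a b - g b a + g b b)
    = (l + Ri G e) * (g a a - g b a) - (l + Ri G e) * (g a b - g b b) by ring.
  by rewrite Ea Eb; ring.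
have hQ : q e = l * (Ri G e - 2 * psi p) / (l + Ri G e).
  rewrite green_diag_diffE //; apply: (mulfI hlr).
  by rewrite mulrCA divff // mulr1 mulrDr Ea Eb; ring.
have Ra : jvolt G' a p b = Ri G e - psi p.
  rewrite (@jvoltE _ _ G' a b (fun x => - psi x)) //; first by rewrite /Ri /eff_res; ring.
  move=> w wS; rewrite (@eq_outflow _ _ G' _ (fun x => (-1) * psi x)); last by move=> x; ring.
  by rewrite outflowZ outflow_delete_edge_voltage //; ring.
split.
- by rewrite /Defs.ratio (negbTE nb) hR; field; rewrite hl hlr.
- by rewrite /yterm1 (negbTE nb) hR; field; rewrite hl hlr.
- by rewrite /yterm2 (negbTE nb) Ra hQ; field; rewrite hl hlr.
Qed.

End NonBridge.

Section Bridge.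
Variable e : V * V * R.
Hypotheses (eE : e \in edges G) (br : is_bridge G e).

Local Notation a := (ep1 e).
Local Notation b := (ep2 e).
Local Notation l := (len e).
Local Notation G' := (delete_edge G e).
Local Notation C := [pred v | connect (adj G') a v].
Local Notation u x := (g a x - g b x).

Let aS : a \in verts G. Proof. by case: (wf eE). Qed.
Let bS : b \in verts G. Proof. by case: (wf eE). Qed.
Let hl : l != 0. Proof. by case: (wf eE) => _ _ lpos; rewrite gt_eqF. Qed.

Let aC : a \in C. Proof. by rewrite inE connect0. Qed.

Let bC : b \notin C.
Proof.
apply/negP => bC; move: br.
by rewrite /is_bridge (connectedb_delete_edge wf conn eE bC).
Qed.

Let C_edge f : f \in edges G' -> (ep1 f \in C) = (ep2 f \in C).
Proof. by move=> fE; rewrite !inE connect_adj_edge. Qed.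

(* the unit current from [a] to [b] has to cross the bridge [e] *)
Lemma green_res_bridge : r e = l.
Proof.
pose gC v : R := if v \in C then 1 else 0.
have S1 : \sum_(w in verts G') gC w * outflow G' (fun x => u x) w = 0.
  rewrite (sum_outflow_by_parts (@wf_delete_edge _ _ G e wf)) big1_seq // => f /andP[_ fE].
  by rewrite /gC C_edge // subrr !mul0r.
have S2 : \sum_(w in verts G') gC w * outflow G' (fun x => u x) w
    = (1 - (u a - u b) / l) * (gC a - gC b).
  rewrite (eq_bigr (fun w => (1 - (u a - u b) / l) * gC w * (unit_at a w - unit_at b w))).
    by rewrite sum_unit_atB //; ring.
  by move=> w wS; rewrite outflow_delete_edge // outflow_greenB // /edge_flow; ring.
move: S2; rewrite S1 /gC aC (negbTE bC) subr0 mulr1 => /esym/eqP.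
rewrite subr_eq0 eq_sym -(divff hl) => /eqP /(mulIf (invr_neq0 hl)) <-.
by rewrite /green_res; ring.
Qed.

(* [u] is constant on each side of the bridge, and vanishes at [p] *)
Lemma green_diag_diff_bridge : q e ^+ 2 = l ^+ 2.
Proof.
pose v x := if x \in C then u a else u b.
have Hv : {in verts G, forall w, outflow G (fun x => u x) w = outflow G v w}.
  move=> w wS; rewrite outflow_greenB // [RHS]outflowE (big_rem _ eE) /= big1_seq ?addr0.
    rewrite /edge_flow /v aC (negbTE bC) (_ : u a - u b = r e); last by rewrite /green_res; ring.
    by rewrite green_res_bridge divff // mul1r.
  by move=> f /andP[_ fE]; rewrite /edge_flow /v C_edge // subrr !mul0r.
have := outflow_inj_const wf conn Hv pS aS; rewrite /= !green_ground // subrr /v aC subrr.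
rewrite green_diag_diffE // -green_res_bridge (_ : r e = u a - u b); last first.
  by rewrite /green_res; ring.
by case: ifP => _ /eqP; rewrite sub0r oppr_eq0 => /eqP ->; ring.
Qed.

Lemma edge_terms_bridge :
  [/\ Defs.ratio G e = r e / l, yterm1 G e = r e ^+ 2 / l & yterm2 G p e = q e ^+ 2 / l].
Proof.
split.
- by rewrite /Defs.ratio br green_res_bridge divff.
- by rewrite /yterm1 br green_res_bridge; field.
- by rewrite /yterm2 br green_diag_diff_bridge; field.
Qed.

End Bridge.

Lemma edge_termsE e : e \in edges G ->
  [/\ Defs.ratio G e = r e / len e, yterm1 G e = r e ^+ 2 / len e
    & yterm2 G p e = q e ^+ 2 / len e].
Proof.
move=> eE; case br: (is_bridge G e).
  exact: edge_terms_bridge.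
by apply: edge_terms_nonbridge; rewrite ?br.
Qed.

Lemma y_invE : y_inv G p = \sum_(e <- edges G) (r e ^+ 2 + 3 * q e ^+ 2) / (4 * len e).
Proof.
rewrite /y_inv !big_seq !mulr_sumr -big_split /=; apply: eq_bigr => e eE.
case: (edge_termsE eE) => _ -> ->; case: (wf eE) => _ _ lpos.
by field; rewrite gt_eqF.
Qed.

End EdgeTerms.

Section Contraction.
Variables (V : finType) (R : realType).
Variables (G : mgraph V R) (e : V * V * R).
Hypotheses (wf : wf_graph G) (conn : connectedb G) (eE : e \in edges G)
  (hab : ep1 e != ep2 e).

Definition contract_vertex (x : V) : V := if x == ep2 e then ep1 e else x.
Definition contract_edge (d : V * V * R) : V * V * R :=
  (contract_vertex (ep1 d), contract_vertex (ep2 d), len d).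

Local Notation cv := contract_vertex.
Local Notation G' := (contract G e).

Lemma contract_edges : edges G' = map contract_edge (rem e (edges G)).
Proof. by []. Qed.

Let aS : ep1 e \in verts G. Proof. by case: (wf eE). Qed.
Let bS : ep2 e \in verts G. Proof. by case: (wf eE). Qed.

Lemma contract_vertex_in x : x \in verts G -> cv x \in verts G'.
Proof.
by move=> xS; rewrite /cv; case: (eqVneq x (ep2 e)) => [_|hx]; rewrite !inE ?hab ?aS ?hx ?xS.
Qed.

Lemma contract_vertex_id x : x \in verts G' -> cv x = x.
Proof. by rewrite !inE /cv => /andP[/negbTE -> _]. Qed.

Lemma contract_verts_sub x : x \in verts G' -> x \in verts G.
Proof. by rewrite !inE => /andP[]. Qed.

Lemma wf_contract : wf_graph G'.
Proof.
move=> d; rewrite contract_edges => /mapP [f /mem_rem fE ->].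
by case: (wf fE) => h1 h2 h3; split => //; apply: contract_vertex_in.
Qed.

Lemma card_contract : #|verts G| = #|verts G'|.+1.
Proof. by rewrite (cardsD1 (ep2 e)) bS. Qed.

Lemma connectedb_contract : connectedb G'.
Proof.
have cl : closed (adj G) [pred v | connect (adj G') (ep1 e) (cv v)].
  apply: connect_closed_edges => f fE; case: (@mem_rem_or _ f e _ eE fE) => [->|fE'].
    by rewrite !inE /cv eqxx (negbTE hab).
  have cfE : contract_edge f \in edges G' by rewrite contract_edges map_f.
  by rewrite !inE (@connect_adj_edge _ _ G' (ep1 e) _ cfE).
apply: (@connectedb_from _ _ _ (ep1 e)) => v vS.
move/forall_inP: conn => /(_ _ aS) /forall_inP /(_ v (contract_verts_sub vS)) cav.
have := closed_connect cl cav; rewrite !inE (contract_vertex_id vS).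
by rewrite /cv (negbTE hab) connect0 => <-.
Qed.

Lemma contract_vertex_flat (f : V -> R) : f (ep1 e) = f (ep2 e) -> forall x, f (cv x) = f x.
Proof. by move=> fab x; rewrite /cv; case: eqP => [->|]. Qed.

Lemma unit_at_contract x w : w != ep2 e ->
  unit_at (cv x) w = unit_at x w + (if w == ep1 e then unit_at x (ep2 e) else 0) :> R.
Proof.
move=> wb; rewrite /unit_at /cv; case: (eqVneq x (ep2 e)) => [->|xb].
  by rewrite (negbTE wb) ?eqxx add0r.
by rewrite if_same addr0.
Qed.

(* contraction glues the Kirchhoff equations at the two ends of [e] *)
Lemma outflow_contract (f : V -> R) w : f (ep1 e) = f (ep2 e) -> w != ep2 e ->
  outflow G' f w = outflow G f w + (if w == ep1 e then outflow G f (ep2 e) else 0).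
Proof.
move=> fab wb; rewrite outflowE contract_edges big_map.
have flow_cv d : edge_flow (contract_edge d) f w
    = edge_flow d f w + (if w == ep1 e then edge_flow d f (ep2 e) else 0).
  rewrite /edge_flow /= !(contract_vertex_flat fab) !unit_at_contract //.
  by case: ifP => _; ring.
have flow_rem v : \sum_(d <- rem e (edges G)) edge_flow d f v = outflow G f v.
  have flat : edge_flow e f v = 0 by rewrite /edge_flow fab subrr !mul0r.
  by have := outflow_delete_edge f v eE; rewrite {1}outflowE flat subr0.
under eq_bigr do rewrite flow_cv.
rewrite big_split /= flow_rem; congr (_ + _); case: ifP => _; first exact: flow_rem.
by rewrite big1.
Qed.

Variables (p : V).
Hypothesis (pS : p \in verts G).

Local Notation g := (green G p).

Definition dipole (x : V) : R := g (ep1 e) x - g (ep2 e) x.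
Local Notation u := dipole.
Local Notation r := (green_res G p (ep1 e) (ep2 e)).

Lemma green_resE : r = u (ep1 e) - u (ep2 e).
Proof. by rewrite /green_res /u; ring. Qed.

Lemma outflow_dipole w : w \in verts G ->
  outflow G u w = unit_at (ep1 e) w - unit_at (ep2 e) w.
Proof. exact: outflow_greenB. Qed.

Lemma dipole_ground : u p = 0.
Proof. by rewrite /u !green_ground // subrr. Qed.

Lemma green_res_edge_neq0 : r != 0.
Proof.
apply/negP => /eqP r0.
have uc : {in verts G &, forall x y, u x = u y}.
  apply: energy_eq0_const => //.
  under eq_bigr => w wS do rewrite outflow_dipole //.
  by rewrite sum_unit_atB // -green_resE.
have := outflow_dipole aS; rewrite /unit_at eqxx (negbTE hab) subr0.
rewrite outflow_flat => [/eqP|f fE]; first by rewrite eq_sym oner_eq0.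
by case: (wf fE) => h1 h2 _; apply: uc.
Qed.

(* the Green function of [G / e], grounded at the image of [p], is the
   rank-one update [g - u u^T / r] of that of [G] *)
Definition contracted_green (x y : V) : R := g x y - u x * u y / r.
Local Notation h := contracted_green.

Lemma contracted_green_sym x y : x \in verts G -> y \in verts G -> h x y = h y x.
Proof. by move=> xS yS; rewrite /h (green_sym wf conn pS xS yS) [u x * _]mulrC. Qed.

Lemma contracted_green_ends x : x \in verts G -> h x (ep1 e) = h x (ep2 e).
Proof.
move=> xS; apply/eqP; rewrite -subr_eq0 /h.
rewrite (_ : _ - _ = (g x (ep1 e) - g x (ep2 e)) - u x * (u (ep1 e) - u (ep2 e)) / r).
  rewrite -green_resE mulfK ?green_res_edge_neq0 //.
  by rewrite /u (green_sym wf conn pS xS aS) (green_sym wf conn pS xS bS) subrr.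
ring.
Qed.

Lemma contracted_green_vertex x y : x \in verts G -> y \in verts G ->
  h (cv x) (cv y) = h x y.
Proof.
move=> xS yS; have cvS z : z \in verts G -> cv z \in verts G.
  by move=> zS; apply/contract_verts_sub/contract_vertex_in.
rewrite (contract_vertex_flat (contracted_green_ends (cvS _ xS))).
rewrite contracted_green_sym ?cvS //.
by rewrite (contract_vertex_flat (contracted_green_ends yS)) contracted_green_sym.
Qed.

Lemma green_contract x w : x \in verts G' -> w \in verts G' ->
  green G' (cv p) x w = h x w.
Proof.
move=> xS' wS'; have xS := contract_verts_sub xS'.
have xb : x != ep2 e by move: xS'; rewrite !inE => /andP[].
have hout v : v \in verts G -> outflow G (h x) v
    = unit_at x v - unit_at p v - u x / r * (unit_at (ep1 e) v - unit_at (ep2 e) v).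
  move=> vS; rewrite (@eq_outflow _ _ G _ (fun v => 1 * g x v + (- (u x / r)) * u v)).
    by rewrite outflow_lin outflow_green // outflow_dipole //; ring.
  by move=> y; rewrite /h; ring.
rewrite /green (@jvoltE _ _ G' (cv p) x (h x)) ?contract_vertex_in //.
- rewrite (contract_vertex_flat (contracted_green_ends xS)) /h green_ground //.
  by rewrite dipole_ground; ring.
- exact: wf_contract.
- exact: connectedb_contract.
move=> v vS'; have vS := contract_verts_sub vS'.
have vb : v != ep2 e by move: vS'; rewrite !inE => /andP[].
rewrite outflow_contract ?contracted_green_ends // !hout // !unit_at_contract //.
have -> : unit_at x (ep2 e) = 0 :> R by rewrite /unit_at eq_sym (negbTE xb).
have -> : unit_at (ep1 e) (ep2 e) = 0 :> R by rewrite /unit_at eq_sym (negbTE hab).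
have -> : unit_at (ep2 e) (ep2 e) = 1 :> R by rewrite /unit_at eqxx.
have -> : unit_at (ep2 e) v = 0 :> R by rewrite /unit_at (negbTE vb).
rewrite [unit_at (ep1 e) v]/unit_at.
by case: (v == ep1 e); ring.
Qed.

End Contraction.

Section ContractedY.
Variables (V : finType) (R : realType).
Variables (G : mgraph V R) (e : V * V * R) (p : V).
Hypotheses (wf : wf_graph G) (conn : connectedb G) (eE : e \in edges G)
  (hab : ep1 e != ep2 e) (pS : p \in verts G).

Local Notation u := (dipole G e p).
Local Notation r := (green_res G p (ep1 e) (ep2 e)).
Local Notation X d := (u (ep1 d) - u (ep2 d)).
Local Notation Y d := (u (ep1 d) + u (ep2 d)).

Lemma y_inv_contract : y_inv (contract G e) (contract_vertex e p) =
  \sum_(d <- edges G) ((green_res G p (ep1 d) (ep2 d) - X d ^+ 2 / r) ^+ 2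
    + 3 * (green_diag_diff G p (ep1 d) (ep2 d) - X d * Y d / r) ^+ 2) / (4 * len d).
Proof.
have wf' := wf_contract wf eE hab; have conn' := connectedb_contract wf conn eE hab.
have cvS x : x \in verts G -> contract_vertex e x \in verts (contract G e).
  exact: contract_vertex_in.
rewrite (y_invE wf' conn' (cvS _ pS)) contract_edges big_map [RHS](big_rem _ eE) /=.
have rne0 := green_res_edge_neq0 wf conn eE hab pS.
case: (wf eE) => aS bS lpos.
rewrite [Z in Z + _](_ : _ = 0) ?add0r; last first.
  have -> : green_diag_diff G p (ep1 e) (ep2 e) = Y e by rewrite green_diag_diffE.
  by rewrite -green_resE; field; rewrite rne0 gt_eqF.
apply: eq_big_seq => d /mem_rem dE; case: (wf dE) => h1 h2 _.
rewrite /green_res /green_diag_diff /= !green_contract ?cvS //.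
by rewrite !contracted_green_vertex // /contracted_green; ring.
Qed.

End ContractedY.

Section Recursion.
Variables (V : finType) (R : realType).
Variables (G : mgraph V R) (p : V).
Hypotheses (wf : wf_graph G) (conn : connectedb G) (pS : p \in verts G).

Local Notation r d := (green_res G p (ep1 d) (ep2 d)).
Local Notation q d := (green_diag_diff G p (ep1 d) (ep2 d)).
Local Notation u e := (dipole G e p).
Local Notation X e d := (u e (ep1 d) - u e (ep2 d)).
Local Notation Y e d := (u e (ep1 d) + u e (ep2 d)).

Lemma foster : \sum_(e <- edges G) r e / len e = #|verts G|%:R - 1.
Proof.
have -> : #|verts G|%:R - 1 = \sum_(w in verts G) outflow G (green G p w) w.
  under eq_bigr => w wS do rewrite outflow_green // {1}/unit_at eqxx.
  by rewrite sumrB sumr_const -[Z in _ - Z](sum_unit_at (fun=> 1 : R) pS); under eq_bigr do rewrite mul1r.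
under [RHS]eq_bigr do rewrite outflowE; rewrite [RHS]exchange_big /=.
apply: eq_big_seq => e eE; case: (wf eE) => aS bS _.
by rewrite [RHS]sum_unit_atB // /green_res; ring.
Qed.

Lemma dipole_drop_sym e d : e \in edges G -> d \in edges G -> X e d = X d e.
Proof.
move=> eE dE; case: (wf eE) => a1 b1 _; case: (wf dE) => a2 b2 _.
by rewrite /dipole !(green_sym wf conn pS a1) // !(green_sym wf conn pS b1) //; ring.
Qed.

Lemma sum_edges_dipole f e : e \in edges G ->
  \sum_(d <- edges G) (f (ep1 d) - f (ep2 d)) * X e d / len d = f (ep1 e) - f (ep2 e).
Proof.
move=> eE; case: (wf eE) => aS bS _.
rewrite -sum_outflow_by_parts //; under eq_bigr => w wS do rewrite outflow_dipole //.
exact: sum_unit_atB.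
Qed.

Lemma sum_dipole_drop_sq d : d \in edges G -> \sum_(e <- edges G) X e d ^+ 2 / len e = r d.
Proof.
move=> dE; rewrite green_resE -(sum_edges_dipole (u d) dE).
by apply: eq_big_seq => e eE; rewrite (dipole_drop_sym eE dE) expr2.
Qed.

Lemma sum_dipole_drop_span d : d \in edges G ->
  \sum_(e <- edges G) X e d * Y e d / len e = q d.
Proof.
move=> dE; case: (wf dE) => aS bS _.
pose s x := green G p (ep1 d) x + green G p (ep2 d) x.
have -> : q d = s (ep1 d) - s (ep2 d).
  by rewrite /s /green_diag_diff (green_sym wf conn pS bS aS); ring.
rewrite -(sum_edges_dipole s dE); apply: eq_big_seq => e eE; case: (wf eE) => a1 b1 _.
rewrite (dipole_drop_sym eE dE) /s /dipole.
by rewrite !(green_sym wf conn pS a1) // !(green_sym wf conn pS b1) //; ring.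
Qed.

(* [(x - y)^4 + 3 (x - y)^2 (x + y)^2 = 4 (x^3 - y^3) (x - y)] *)
Lemma sum_dipole_quartic e : e \in edges G ->
  \sum_(d <- edges G) (X e d ^+ 4 + 3 * X e d ^+ 2 * Y e d ^+ 2) / len d
  = r e * (r e ^+ 2 + 3 * q e ^+ 2).
Proof.
move=> eE; case: (wf eE) => aS bS _.
have := sum_edges_dipole (fun x => 4 * u e x ^+ 3) eE.
rewrite (eq_bigr (fun d => (X e d ^+ 4 + 3 * X e d ^+ 2 * Y e d ^+ 2) / len d)).
  move=> ->; rewrite green_resE green_diag_diffE //; rewrite /dipole; ring.
by move=> d _; ring.
Qed.

Local Notation T e d := (((r d - X e d ^+ 2 / r e) ^+ 2
  + 3 * (q d - X e d * Y e d / r e) ^+ 2) / (4 * len d)).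

Lemma ratio_y_contract e : e \in edges G -> ep1 e != ep2 e ->
  Defs.ratio G e * y_inv (contract G e) (contract_vertex e p)
  = r e / len e * \sum_(d <- edges G) T e d.
Proof.
move=> eE hab; case: (edge_termsE wf conn pS eE) => -> _ _.
by rewrite (y_inv_contract wf conn eE hab pS).
Qed.

Lemma contracted_term_split e d : e \in edges G -> d \in edges G ->
  r e / len e * T e d =
    r e / len e * ((r d ^+ 2 + 3 * q d ^+ 2) / (4 * len d))
  - (2 * r d * (X e d ^+ 2 / len e) + 6 * q d * (X e d * Y e d / len e)) / (4 * len d)
  + (X e d ^+ 4 + 3 * X e d ^+ 2 * Y e d ^+ 2) / len d / (4 * len e * r e).
Proof.
move=> eE dE; case: (wf eE) => _ _ le; case: (wf dE) => _ _ ld.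
case: (eqVneq (ep1 e) (ep2 e)) => [hab|hab].
  have u0 x : u e x = 0 by rewrite /dipole hab subrr.
  by rewrite !u0 /green_res hab; ring.
have := green_res_edge_neq0 wf conn eE hab pS.
by rewrite /dipole => rne0; field; rewrite rne0 !gt_eqF.
Qed.

Lemma sum_ratio_y_contract :
  \sum_(e <- edges G | ep1 e != ep2 e)
     Defs.ratio G e * y_inv (contract G e) (contract_vertex e p)
  = (#|verts G|%:R - 2) * y_inv G p.
Proof.
have loop0 e : ep1 e = ep2 e -> r e = 0 by move=> hab; rewrite /green_res hab; ring.
rewrite big_seq_cond (eq_bigr (fun e => r e / len e * \sum_(d <- edges G) T e d)); last first.
  by move=> e /andP[eE hab]; apply: ratio_y_contract.
rewrite -big_seq_cond big_mkcond /=.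
rewrite (eq_bigr (fun e => r e / len e * \sum_(d <- edges G) T e d)); last first.
  by move=> e _; case: eqP => // /loop0 ->; rewrite !mul0r.
have yE := y_invE wf conn pS.
rewrite big_seq; under eq_bigr => e eE do
  rewrite mulr_sumr (eq_big_seq _ (fun d dE => contracted_term_split eE dE)).
rewrite -big_seq.
under eq_bigr do rewrite big_split sumrB /=.
rewrite big_split sumrB /=.
have SA : \sum_(e <- edges G) \sum_(d <- edges G)
    r e / len e * ((r d ^+ 2 + 3 * q d ^+ 2) / (4 * len d)) = (#|verts G|%:R - 1) * y_inv G p.
  by rewrite yE -foster mulr_suml; under eq_bigr do rewrite -mulr_sumr.
have SBC : \sum_(e <- edges G) \sum_(d <- edges G)
    (2 * r d * (X e d ^+ 2 / len e) + 6 * q d * (X e d * Y e d / len e)) / (4 * len d)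
    = 2 * y_inv G p.
  rewrite exchange_big yE mulr_sumr big_seq [RHS]big_seq; apply: eq_bigr => d dE.
  rewrite -mulr_suml big_split /= -!mulr_sumr.
  by rewrite sum_dipole_drop_sq // sum_dipole_drop_span //; ring.
have SD : \sum_(e <- edges G) \sum_(d <- edges G)
    (X e d ^+ 4 + 3 * X e d ^+ 2 * Y e d ^+ 2) / len d / (4 * len e * r e) = y_inv G p.
  rewrite yE !big_seq; apply: eq_bigr => e eE.
  rewrite -mulr_suml sum_dipole_quartic //; case: (wf eE) => _ _ le.
  case: (eqVneq (ep1 e) (ep2 e)) => [hab|hab].
    by rewrite loop0 // /green_diag_diff hab subrr; ring.
  by field; rewrite green_res_edge_neq0 // gt_eqF.
by rewrite SA SBC SD; ring.
Qed.

End Recursion.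

Section Induction.
Variables (V : finType) (R : realType).

(* with two vertices every [g(x, .)] is determined by [x] and [p], and then
   [r(a', b')^2 = q(a', b')^2 = r(a, b) r(a', b')] for every edge *)
Lemma y_inv_two_vertices (G : mgraph V R) (p : V) : wf_graph G -> connectedb G ->
  #|verts G| = 2%N -> p \in verts G -> y_inv G p = two_vertex_res G.
Proof.
move=> wf conn c2 pS; rewrite /two_vertex_res.
have := enum_uniq (mem (verts G)); have : size (enum (verts G)) = 2%N by rewrite -cardE.
case E: (enum (verts G)) => [|a [|b [|c s]]] // _ _.
have aS : a \in verts G by rewrite -mem_enum E inE eqxx.
have bS : b \in verts G by rewrite -mem_enum E !inE eqxx orbT.
have ab x : x \in verts G -> x = a \/ x = b.
  by rewrite -mem_enum E !inE => /orP[/eqP|/eqP]; [left|right].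
have g_pp w : w \in verts G -> green G p p w = 0.
  move=> wS; rewrite /green (@jvoltE _ _ G p p (fun=> 0)) ?subrr //.
  by move=> v vS; rewrite outflow_flat ?subrr.
have g_p w : w \in verts G -> green G p w p = 0 by move=> wS; apply: green_ground.
have rq x y : x \in verts G -> y \in verts G ->
    green_diag_diff G p x y ^+ 2 = green_res G p x y ^+ 2
    /\ green_res G p x y ^+ 2 = green_res G p a b * green_res G p x y.
  move=> xS yS; case: (ab p pS) => hp; case: (ab x xS) => ->; case: (ab y yS) => ->;
    subst p; rewrite /green_res /green_diag_diff !g_pp // ?g_p //; split; ring.
have -> : eff_res G a b = green_res G p a b.
  by rewrite /eff_res (jvolt_green wf conn pS) // /green_res; ring.
rewrite (y_invE wf conn pS).
transitivity (\sum_(d <- edges G) green_res G p a b * (green_res G p (ep1 d) (ep2 d) / len d)).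
  apply: eq_big_seq => d dE; case: (wf d dE) => h1 h2 lpos.
  by case: (rq _ _ h1 h2) => -> ->; field; rewrite gt_eqF.
by rewrite -mulr_sumr (foster wf conn pS) c2 -[2%:R]/(1 + 1) addrK mulr1.
Qed.

Lemma nested_sum_y_inv n (G : mgraph V R) (p : V) : wf_graph G -> connectedb G ->
  #|verts G| = n.+2 -> p \in verts G -> (n`!)%:R * y_inv G p = nested_sum n G.
Proof.
elim: n G p => [|n IH] G p wf conn cG pS.
  by rewrite fact0 mul1r (y_inv_two_vertices wf conn cG pS).
rewrite [nested_sum _ _]/= big_seq_cond.
rewrite (eq_bigr (fun e => (n`!)%:R *
    (Defs.ratio G e * y_inv (contract G e) (contract_vertex e p)))); last first.
  move=> e /andP[eE hab]; rewrite -(IH _ (contract_vertex e p)).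
  - by ring.
  - exact: wf_contract.
  - exact: connectedb_contract.
  - by move: cG; rewrite (card_contract wf eE) => -[].
  - exact: contract_vertex_in.
rewrite -mulr_sumr -big_seq_cond (sum_ratio_y_contract wf conn pS) cG factS natrM.
rewrite (_ : (n.+3%:R - 2 : R) = n.+1%:R); first by ring.
by rewrite -[n.+3]addn2 natrD addrK.
Qed.

End Induction.

Unset Implicit Arguments.

Theorem corollary3p13 (V : finType) (R : realType) (G : mgraph V R) (p : V) :
  wf_graph G -> connectedb G -> (3 <= #|verts G|)%N -> p \in verts G ->
  ((#|verts G| - 2)`!)%:R * y_inv G p = nested_sum (#|verts G| - 2) G.
Proof.
move=> wf conn c3 pS; apply: nested_sum_y_inv => //.
by rewrite -addn2 subnK // (leq_trans _ c3).
Qed.
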